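(* Let $\phi$ be 1-Lipschitz with $|\phi''|\le H$, $R=R_{\max}/R_{\min}$, and consider one gradient descent step $W^{(t+1)}=W^{(t)}-\alpha\nabla\hat L(W^{(t)})$ on the logistic loss. Suppose that at time $t$ near-orthogonality of gradients holds with constant $C'\ge25R^2/c+25$, i.e. $\|\nabla f(x_i;W^{(t)})\|_F^2\ge C'n\max_{k\ne i}|\langle\nabla f(x_i;W^{(t)}),\nabla f(x_k;W^{(t)})\rangle|$ for all $i$, and gradient persistence holds with constant $c>0$, i.e. $\|\nabla f(x_i;W^{(t)})\|_F^2\ge c\|x_i\|^2$ for all $i$. If $\alpha\le[5HR_{\max}^2n(10R^2/c+10)]^{-1}$, then for all $i,j\in[n]$, $$\frac{e^{-y_if(x_i;W^{(t+1)})}}{e^{-y_jf(x_j;W^{(t+1)})}}\le\frac{e^{-y_if(x_i;W^{(t)})}}{e^{-y_jf(x_j;W^{(t)})}}\cdot\exp\!\left(-\frac{g_j^{(t)}\alpha cR_{\min}^2}{n}\Big(\frac{g_i^{(t)}}{g_j^{(t)}}-\frac{R^2}{c}\Big)\right)\cdot\exp\!\left(\frac{\alpha R_{\max}^2}{(10R^2/c+10)n}\hat G(W^{(t)})\right).$$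
   Context: $f(x;W)=\sum_{j=1}^ma_j\phi(\langle w_j,x\rangle)$ with $a_j\in\{\pm1/\sqrt m\}$, gradients with respect to $W$. Logistic loss $\ell(z)=\log(1+e^{-z})$, $\hat L(W)=\frac1n\sum_i\ell(y_if(x_i;W))$. Sigmoid loss $g(z)=-\ell'(z)=1/(1+e^z)$, $g_i^{(t)}=g(y_if(x_i;W^{(t)}))$, $\hat G(W)=\frac1n\sum_ig(y_if(x_i;W))$. $R_{\max}=\max_i\|x_i\|$, $R_{\min}=\min_i\|x_i\|$. *)

From HB Require Import structures.
From mathcomp Require Import all_boot all_order all_algebra.
From mathcomp Require Import all_classical all_reals all_analysis.
Set Implicit Arguments. Unset Strict Implicit. Unset Printing Implicit Defensive.
Import Order.TTheory GRing.Theory Num.Theory.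
Import numFieldNormedType.Exports.
Local Open Scope ring_scope.

Section Defs.
Variables (R : realType) (n m d : nat).

Definition dotv (u v : 'I_d -> R) : R := \sum_(k < d) u k * v k.
Definition vnorm (u : 'I_d -> R) : R := Num.sqrt (dotv u u).

Definition netf (a : 'I_m -> R) (phi : R -> R) (W : 'M[R]_(m, d))
  (x : 'I_d -> R) : R :=
  \sum_(j < m) a j * phi (dotv (fun k => W j k) x).

(* Gradient of f(x;W) w.r.t. W, given phi' the derivative of phi:
   d f / d W_{jk} = a_j phi'(<w_j,x>) x_k *)
Definition gradf (a : 'I_m -> R) (phi' : R -> R) (W : 'M[R]_(m, d))
  (x : 'I_d -> R) : 'M[R]_(m, d) :=
  \matrix_(j < m, k < d) (a j * phi' (dotv (fun l => W j l) x) * x k).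

Definition frob (A B : 'M[R]_(m, d)) : R :=
  \sum_(j < m) \sum_(k < d) A j k * B j k.

(* sigmoid loss g(z) = -l'(z) = 1/(1+e^z) *)
Definition gsig (z : R) : R := (1 + expR z)^-1.

Definition Rmaxx (x : 'I_n -> 'I_d -> R) : R :=
  \big[Num.max/0]_(i < n) vnorm (x i).
(* minimum over i (n >= 1 is assumed where used) *)
Definition Rminx (x : 'I_n -> 'I_d -> R) : R :=
  \big[Num.min/Rmaxx x]_(i < n) vnorm (x i).

Definition Ghat (a : 'I_m -> R) (phi : R -> R) (x : 'I_n -> 'I_d -> R)
  (y : 'I_n -> R) (W : 'M[R]_(m, d)) : R :=
  n%:R^-1 * \sum_(i < n) gsig (y i * netf a phi W (x i)).

(* One GD step on the logistic loss:
   grad Lhat(W) = (1/n) sum_i l'(y_i f_i) y_i grad f_i = -(1/n) sum_i g_i y_i grad f_i *)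
Definition gd_step (a : 'I_m -> R) (phi phi' : R -> R) (x : 'I_n -> 'I_d -> R)
  (y : 'I_n -> R) (alpha : R) (W : 'M[R]_(m, d)) : 'M[R]_(m, d) :=
  W + (alpha / n%:R) *:
      \sum_(i < n) (gsig (y i * netf a phi W (x i)) * y i) *: gradf a phi' W (x i).

End Defs.

From HB Require Import structures.
From mathcomp Require Import all_boot all_order all_algebra.
From mathcomp Require Import all_classical all_reals all_analysis.
From mathcomp Require Import ring lra.
Import Order.TTheory GRing.Theory Num.Theory.
Import numFieldNormedType.Exports.
Set Implicit Arguments. Unset Strict Implicit. Unset Printing Implicit Defensive.
Local Open Scope ring_scope.

(* One gradient step moves [W] by [D = sum_k b_k grad f(x_k)] with [b_k = alpha g_k y_k / n].
   Expanding [phi] to second order neuron by neuron, the margin [y_l f(x_l)] changes by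
   [y_l <grad f(x_l), D>] up to [H/2 (alpha Ghat Rmax^2)^2], since the j-th row of [D]
   moves the preactivation of [x_l] by at most [|a_j| alpha Ghat Rmax^2].  In
   [y_l <grad f(x_l), D>] the diagonal term [alpha g_l |grad f(x_l)|^2 / n] dominates:
   the cross terms cost at most [alpha Ghat max_(k != l) |<grad f(x_l), grad f(x_k)>|],
   which near-orthogonality makes small.  Bounding the diagonal term of [i] from below by
   gradient persistence, that of [j] from above by [Rmax^2], and the Taylor errors by the
   step-size condition, the margin of [j] gains at most the claimed exponent over that
   of [i]; exponentiating gives the ratio bound. *)

Section SecondOrderTaylor.
Variable R : realType.
Implicit Types (f df : R -> R) (u v h : R).

Lemma is_derive_MVT_segment f df u v : u <= v ->
  (forall t : R, is_derive t 1 f (df t)) ->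
  exists2 c, c \in `[u, v] & f v - f u = df c * (v - u).
Proof.
move=> uv Df; apply: MVT_segment uv (fun t _ => Df t) _.
by apply: derivable_within_continuous => t _; exact: ex_derive.
Qed.

Lemma bounded_derive_lipschitz f df (M : R) :
  (forall t : R, is_derive t 1 f (df t)) -> (forall t : R, `|df t| <= M) ->
  forall u v, `|f v - f u| <= M * `|v - u|.
Proof.
move=> Df dfM u v; wlog uv : u v / u <= v.
  move=> hw; have [/hw //|/ltW/hw] := leP u v.
  by rewrite -normrN opprB -(normrN (u - v)) opprB.
have [c _ ->] := is_derive_MVT_segment uv Df.
by rewrite normrM ler_wpM2r.
Qed.

Variables (phi phi' phi'' : R -> R) (H : R).
Hypothesis phi'_derive : forall t : R, is_derive t 1 phi (phi' t).
Hypothesis phi''_derive : forall t : R, is_derive t 1 phi' (phi'' t).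
Hypothesis phi''_le : forall t : R, `|phi'' t| <= H.

(* [F] vanishes at [u], and [F' v = s (phi' v - phi' u) - H (v - u)] has the sign of [u - v]
   because [phi'] is [H]-Lipschitz; so [F] is maximal at [u]. *)
Lemma taylor2_remainder_scale_le (s u h : R) : `|s| <= 1 ->
  s * (phi (u + h) - phi u - phi' u * h) <= H / 2 * h ^+ 2.
Proof.
move=> s1.
pose F v := s * (phi v - phi u - phi' u * (v - u)) - H / 2 * (v - u) ^+ 2.
pose dF v := s * (phi' v - phi' u) - H * (v - u).
have DF v : is_derive v 1 F (dF v).
  rewrite /F /dF; apply: is_derive_eq.
  by rewrite !subr0 /GRing.scale /=; field.
have dF_bound v : `|s * (phi' v - phi' u)| <= H * `|v - u|.
  rewrite normrM; apply: le_trans (bounded_derive_lipschitz phi''_derive phi''_le u v).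
  by rewrite ler_piMl.
suff : F (u + h) <= F u by rewrite /F (addrC u h) addrK !subrr; lra.
have [h0|h0] := leP 0 h.
- have uh : u <= u + h by lra.
  have [c /[!in_itv] /andP[c1 _] E] := is_derive_MVT_segment uh DF.
  rewrite -subr_le0 E (addrC u) addrK mulr_le0_ge0 //.
  by move: (dF_bound c); rewrite (@ger0_norm _ (c - u)) ?subr_ge0 // ler_norml /dF; lra.
- have uh : u + h <= u by lra.
  have [c /[!in_itv] /andP[_ c2] E] := is_derive_MVT_segment uh DF.
  rewrite -subr_ge0 E mulr_ge0 ?subr_ge0 //.
  by move: (dF_bound c); rewrite (@ler0_norm _ (c - u)) ?subr_le0 // ler_norml /dF; lra.
Qed.

Lemma taylor2_remainder_le (u h : R) :
  `|phi (u + h) - phi u - phi' u * h| <= H / 2 * h ^+ 2.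
Proof.
apply/ler_normlP; split.
- rewrite -mulN1r; apply: taylor2_remainder_scale_le.
  by rewrite normrN normr1.
- rewrite -[X in X <= _]mul1r; apply: taylor2_remainder_scale_le.
  by rewrite normr1.
Qed.

(* By the Taylor bound, [|phi' u| h <= h + H h^2 / 2] for every [h > 0]. *)
Lemma lipschitz1_derive_le1 :
  (forall u v, `|phi u - phi v| <= `|u - v|) -> forall u, `|phi' u| <= 1.
Proof.
move=> phi_lip u; have H0 : 0 <= H := le_trans (normr_ge0 _) (phi''_le 0).
apply/ler_addgt0Pr => e e0.
pose h := e / (H + 1); have h0 : 0 < h by rewrite divr_gt0 //; lra.
have he : H * h <= e.
  by rewrite /h mulrA ler_pdivrMr ?ler_pM2l //; lra.
have T : `|phi' u| * h <= h + H / 2 * h ^+ 2.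
  have -> : `|phi' u| * h = `|phi' u * h| by rewrite normrM (gtr0_norm h0).
  have -> : phi' u * h = (phi (u + h) - phi u) - (phi (u + h) - phi u - phi' u * h) by ring.
  rewrite (le_trans (ler_normB _ _)) // lerD ?taylor2_remainder_le //.
  by move: (phi_lip (u + h) u); rewrite (addrC u) addrK (gtr0_norm h0).
have : `|phi' u| <= 1 + H / 2 * h.
  by rewrite -(ler_pM2r h0) (_ : (1 + H / 2 * h) * h = h + H / 2 * h ^+ 2) //; ring.
have : 0 <= H * h by rewrite mulr_ge0 // ltW.
lra.
Qed.

End SecondOrderTaylor.

Section Dot.
Variables (R : realType) (d : nat).
Implicit Types u v : 'I_d -> R.

Lemma dotv_ge0 u : 0 <= dotv u u.
Proof. by apply: sumr_ge0 => k _; rewrite -expr2 sqr_ge0. Qed.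

Lemma vnorm_ge0 u : 0 <= vnorm u.
Proof. exact: sqrtr_ge0. Qed.

Lemma vnorm_sqr u : vnorm u ^+ 2 = dotv u u.
Proof. by rewrite sqr_sqrtr // dotv_ge0. Qed.

Lemma normr_dotv_le u v : `|dotv u v| <= (dotv u u + dotv v v) / 2.
Proof.
rewrite /dotv -big_split /= mulr_suml (le_trans (ler_norm_sum _ _ _)) //.
apply: ler_sum => k _; rewrite normrM.
have := sqr_ge0 (`|u k| - `|v k|).
by rewrite -!expr2 -(real_normK (num_real (u k))) -(real_normK (num_real (v k))); lra.
Qed.

End Dot.

Section DataRadii.
Variables (R : realType) (n d : nat) (x : 'I_n -> 'I_d -> R).

Lemma vnorm_le_Rmaxx k : vnorm (x k) <= Rmaxx x.
Proof. exact: le_bigmax. Qed.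

Lemma Rminx_le_vnorm k : Rminx x <= vnorm (x k).
Proof. exact: bigmin_le. Qed.

Lemma Rminx_gt0 : (0 < n)%N -> (forall k, 0 < vnorm (x k)) -> 0 < Rminx x.
Proof.
move=> n0 x_gt0; have Rmax0 := lt_le_trans (x_gt0 (Ordinal n0)) (vnorm_le_Rmaxx _).
by apply: (big_ind (fun v => 0 < v)) => // u v u0 v0; rewrite lt_min u0.
Qed.

Lemma vnorm_sqr_le_Rmaxx k : vnorm (x k) ^+ 2 <= Rmaxx x ^+ 2.
Proof.
have Rmax_ge0 := le_trans (vnorm_ge0 _) (vnorm_le_Rmaxx k).
by rewrite ler_pXn2r ?nnegrE ?vnorm_le_Rmaxx ?vnorm_ge0.
Qed.

Lemma Rminx_sqr_le_vnorm k : (0 < n)%N -> (forall k, 0 < vnorm (x k)) ->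
  Rminx x ^+ 2 <= vnorm (x k) ^+ 2.
Proof.
move=> n0 x_gt0.
by rewrite ler_pXn2r ?nnegrE ?Rminx_le_vnorm ?vnorm_ge0 ?ltW ?Rminx_gt0.
Qed.

Lemma normr_dotv_le_Rmaxx k l : `|dotv (x k) (x l)| <= Rmaxx x ^+ 2.
Proof.
apply: le_trans (normr_dotv_le _ _) _; rewrite -!vnorm_sqr.
by have := vnorm_sqr_le_Rmaxx k; have := vnorm_sqr_le_Rmaxx l; lra.
Qed.

End DataRadii.

Lemma sqr_pm_invsqrt (R : realType) (m : nat) (t : R) :
  t = (Num.sqrt m%:R)^-1 \/ t = - (Num.sqrt m%:R)^-1 -> t ^+ 2 = m%:R^-1.
Proof. by case=> ->; rewrite ?sqrrN exprVn sqr_sqrtr ?ler0n. Qed.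

Lemma gsig_gt0 (R : realType) (z : R) : 0 < gsig z.
Proof. by rewrite invr_gt0 addr_gt0 ?expR_gt0. Qed.

Lemma gsig_le1 (R : realType) (z : R) : gsig z <= 1.
Proof. by rewrite invf_le1 ?addr_gt0 ?expR_gt0 // lerDl expR_ge0. Qed.

Section TwoLayerNetwork.
Variables (R : realType) (m d : nat) (a : 'I_m -> R) (phi phi' phi'' : R -> R) (H : R).

Local Notation preact W j u := (@dotv R d (fun l => W j l) u).

Lemma frob_sumr n (A : 'M[R]_(m, d)) (B : 'I_n -> 'M[R]_(m, d)) (b : 'I_n -> R) :
  frob A (\sum_(k < n) b k *: B k) = \sum_(k < n) b k * frob A (B k).
Proof.
under [RHS]eq_bigr do rewrite mulr_sumr.
rewrite exchange_big; apply: eq_bigr => j _.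
under [RHS]eq_bigr do rewrite mulr_sumr.
rewrite exchange_big; apply: eq_bigr => l _.
by rewrite summxE mulr_sumr; apply: eq_bigr => k _; rewrite !mxE mulrCA.
Qed.

Lemma preact_scale_sum n (B : 'I_n -> 'M[R]_(m, d)) (b : 'I_n -> R) j u :
  preact (\sum_(k < n) b k *: B k) j u = \sum_(k < n) b k * preact (B k) j u.
Proof.
under [RHS]eq_bigr do rewrite mulr_sumr.
rewrite exchange_big; apply: eq_bigr => l _.
by rewrite summxE mulr_suml; apply: eq_bigr => k _; rewrite !mxE mulrA.
Qed.

Lemma preact_gradf W v j u :
  preact (gradf a phi' W v) j u = a j * phi' (preact W j v) * dotv v u.
Proof. by rewrite mulr_sumr; apply: eq_bigr => l _; rewrite mxE mulrA. Qed.

Lemma frob_gradfl W u D :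
  frob (gradf a phi' W u) D = \sum_(j < m) a j * phi' (preact W j u) * preact D j u.
Proof.
apply: eq_bigr => j _; rewrite mulr_sumr; apply: eq_bigr => l _.
by rewrite mxE; ring.
Qed.

Hypothesis phi'_derive : forall t : R, is_derive t 1 phi (phi' t).
Hypothesis phi''_derive : forall t : R, is_derive t 1 phi' (phi'' t).
Hypothesis phi''_le : forall t : R, `|phi'' t| <= H.

Lemma netf_taylor2_le W D u :
  `|netf a phi (W + D) u - netf a phi W u - frob (gradf a phi' W u) D|
    <= H / 2 * \sum_(j < m) `|a j| * preact D j u ^+ 2.
Proof.
have preactD j : preact (W + D) j u = preact W j u + preact D j u.
  by rewrite -big_split; apply: eq_bigr => l _; rewrite mxE mulrDl.
rewrite frob_gradfl /netf -!sumrB mulr_sumr (le_trans (ler_norm_sum _ _ _)) //.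
apply: ler_sum => j _; rewrite preactD.
rewrite (_ : _ - _ - _ = a j * (phi (preact W j u + preact D j u) - phi (preact W j u)
                                - phi' (preact W j u) * preact D j u)); last by ring.
rewrite normrM mulrCA ler_wpM2l //.
exact: taylor2_remainder_le.
Qed.

Hypothesis phi'_le1 : forall t : R, `|phi' t| <= 1.
Hypothesis a_sqr : forall j, a j ^+ 2 = m%:R^-1.

Lemma normr_a_le1 j : `|a j| <= 1.
Proof.
have m0 : (0 < m)%N by case: m j => [[]|].
rewrite -(expr_le1 (n := 2)) // real_normK ?num_real // a_sqr.
by rewrite invf_le1 ?ler1n ?ltr0n.
Qed.

Lemma sum_a_sqr_le1 : \sum_(j < m) a j ^+ 2 <= 1.
Proof.
under eq_bigr do rewrite a_sqr.
rewrite sumr_const card_ord; case: m => [|m']; first by rewrite mulr0n.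
by rewrite -[_ *+ _]mulr_natl mulfV // pnatr_eq0.
Qed.

Lemma preact_gradf_comb_le n (xs : 'I_n -> 'I_d -> R) (b : 'I_n -> R) W j u (B : R) :
  (forall k, `|dotv (xs k) u| <= B) ->
  `|preact (\sum_(k < n) b k *: gradf a phi' W (xs k)) j u|
    <= `|a j| * ((\sum_(k < n) `|b k|) * B).
Proof.
move=> xsB; rewrite preact_scale_sum mulr_suml mulr_sumr.
rewrite (le_trans (ler_norm_sum _ _ _)) //; apply: ler_sum => k _.
rewrite preact_gradf !normrM -!mulrA mulrCA.
apply: ler_wpM2l => //; apply: ler_wpM2l => //.
by rewrite -[B]mul1r ler_pM.
Qed.

Lemma netf_taylor2_gradf_comb_le n (xs : 'I_n -> 'I_d -> R) (b : 'I_n -> R) W u (B : R) :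
  (forall k, `|dotv (xs k) u| <= B) ->
  `|netf a phi (W + \sum_(k < n) b k *: gradf a phi' W (xs k)) u - netf a phi W u
      - \sum_(k < n) b k * frob (gradf a phi' W u) (gradf a phi' W (xs k))|
    <= H / 2 * ((\sum_(k < n) `|b k|) * B) ^+ 2.
Proof.
move=> xsB; rewrite -frob_sumr (le_trans (netf_taylor2_le _ _ _)) //.
have H0 : 0 <= H := le_trans (normr_ge0 _) (phi''_le 0).
apply: ler_wpM2l; first by rewrite divr_ge0.
set S := _ * B; apply: le_trans (_ : \sum_(j < m) a j ^+ 2 * S ^+ 2 <= _); last first.
  by rewrite -mulr_suml ler_piMl ?sqr_ge0 ?sum_a_sqr_le1.
apply: ler_sum => j _; have aS := preact_gradf_comb_le b W j xsB.
set p := preact _ j u in aS *.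
rewrite -(real_normK (num_real (a j))) -exprMn -(real_normK (num_real p)).
have pS : `|p| ^+ 2 <= (`|a j| * S) ^+ 2 by rewrite ler_pXn2r ?nnegrE ?(le_trans _ aS).
by apply: le_trans pS; rewrite ler_piMl ?sqr_ge0 ?normr_a_le1.
Qed.

Lemma frob_gradf_self_le W (u : 'I_d -> R) :
  frob (gradf a phi' W u) (gradf a phi' W u) <= vnorm u ^+ 2.
Proof.
rewrite frob_gradfl vnorm_sqr; under eq_bigr do rewrite preact_gradf.
apply: le_trans (_ : \sum_(j < m) a j ^+ 2 * dotv u u <= _); last first.
  by rewrite -mulr_suml ler_piMl ?dotv_ge0 ?sum_a_sqr_le1.
apply: ler_sum => j _.
rewrite (_ : _ * _ = a j ^+ 2 * (phi' (preact W j u) ^+ 2 * dotv u u)); last by ring.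
rewrite ler_wpM2l ?sqr_ge0 // ler_piMl ?dotv_ge0 //.
by rewrite -real_normK ?num_real // expr_le1.
Qed.

Section GradientStep.
Variables (n : nat) (x : 'I_n -> 'I_d -> R) (y : 'I_n -> R) (alpha : R) (W : 'M[R]_(m, d)).
Hypothesis y_sign : forall k, y k = 1 \/ y k = -1.
Hypothesis alpha_ge0 : 0 <= alpha.

Local Notation g k := (gsig (y k * netf a phi W (x k))).
Local Notation F l k := (frob (gradf a phi' W (x l)) (gradf a phi' W (x k))).
Local Notation step_coef k := (alpha / n%:R * (g k * y k)).
Local Notation max_cross l := (\big[Num.max/0]_(k < n | k != l) `|F l k|).

Lemma normr_y k : `|y k| = 1.
Proof. by case: (y_sign k) => ->; rewrite ?normrN normr1. Qed.

Lemma mulr_yy k : y k * y k = 1.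
Proof. by case: (y_sign k) => ->; rewrite ?mulrNN mulr1. Qed.

Lemma gd_stepE : gd_step a phi phi' x y alpha W
  = W + \sum_(k < n) step_coef k *: gradf a phi' W (x k).
Proof.
by rewrite /gd_step scaler_sumr; congr (_ + _); apply: eq_bigr => k _; rewrite scalerA.
Qed.

Lemma Ghat_ge0 : 0 <= Ghat a phi x y W.
Proof. by rewrite mulr_ge0 ?invr_ge0 // sumr_ge0 // => k _; rewrite ltW ?gsig_gt0. Qed.

Lemma Ghat_le1 : Ghat a phi x y W <= 1.
Proof.
apply: le_trans (_ : n%:R^-1 * n%:R <= 1); last first.
  by case: (n) => [|k]; rewrite ?invr0 ?mul0r // mulVf ?pnatr_eq0.
apply: ler_wpM2l; first by rewrite invr_ge0.
apply: le_trans (ler_sum _ (fun k _ => gsig_le1 _)) _.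
by rewrite sumr_const card_ord.
Qed.

Lemma sum_normr_step_coef : \sum_(k < n) `|step_coef k| = alpha * Ghat a phi x y W.
Proof.
rewrite /Ghat mulrA mulr_sumr; apply: eq_bigr => k _.
rewrite normrM (ger0_norm (divr_ge0 alpha_ge0 (ler0n _ _))).
by rewrite normrM normr_y mulr1 gtr0_norm ?gsig_gt0.
Qed.

Lemma margin_first_order_le l :
  `|y l * \sum_(k < n) step_coef k * F l k - alpha / n%:R * (g l * F l l)|
    <= alpha * Ghat a phi x y W * max_cross l.
Proof.
have t_ge0 k : 0 <= alpha / n%:R * g k.
  by rewrite mulr_ge0 ?divr_ge0 ?ler0n ?(ltW (gsig_gt0 _)).
rewrite mulr_sumr (bigD1 l) //= (_ : y l * _ = alpha / n%:R * (g l * F l l)); last first.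
  by rewrite -[RHS]mulr1 -(mulr_yy l); ring.
rewrite addrAC subrr add0r (le_trans (ler_norm_sum _ _ _)) //.
apply: le_trans (_ : \sum_(k < n | k != l) alpha / n%:R * g k * max_cross l <= _).
  apply: ler_sum => k kl.
  rewrite (_ : y l * _ = alpha / n%:R * g k * (y l * y k * F l k)); last by ring.
  rewrite normrM (ger0_norm (t_ge0 k)) !normrM !normr_y !mul1r ler_wpM2l //.
  exact: le_bigmax_cond.
apply: le_trans (_ : \sum_(k < n) alpha / n%:R * g k * max_cross l <= _).
  by rewrite [X in _ <= X](bigD1 l) //= ler_wpDl // mulr_ge0 // bigmax_ge_id.
by rewrite -mulr_suml -mulr_sumr /Ghat mulrA.
Qed.

Lemma margin_step_le l (B : R) : (forall k, `|dotv (x k) (x l)| <= B) ->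
  `|y l * netf a phi (gd_step a phi phi' x y alpha W) (x l) - y l * netf a phi W (x l)
      - alpha / n%:R * (g l * F l l)|
    <= alpha * Ghat a phi x y W * max_cross l + H / 2 * (alpha * Ghat a phi x y W * B) ^+ 2.
Proof.
move=> xB; have := netf_taylor2_gradf_comb_le (fun k => step_coef k) W xB.
rewrite sum_normr_step_coef -gd_stepE => taylor.
set L := \sum_(k < n) _ * F l k in taylor *.
rewrite (_ : _ - _ - _ = y l * (netf a phi (gd_step a phi phi' x y alpha W) (x l)
    - netf a phi W (x l) - L) + (y l * L - alpha / n%:R * (g l * F l l))); last by ring.
rewrite (le_trans (ler_normD _ _)) // addrC lerD ?margin_first_order_le //.
by rewrite normrM normr_y mul1r.
Qed.

End GradientStep.

End TwoLayerNetwork.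

Lemma margin_gap_le (R : realFieldType) (alpha N c C' H Rmax Rmin G gi gj Mi Mj Fi Fj Di Dj : R) :
  let Rr := Rmax / Rmin in let K := 10 * Rr ^+ 2 / c + 10 in
  let E := H / 2 * (alpha * G * Rmax ^+ 2) ^+ 2 in
  0 < alpha -> 0 < N -> 0 < c -> 0 <= H -> 0 < Rmin -> 0 <= gi -> 0 < gj ->
  0 <= G -> G <= 1 -> 0 <= Mi -> 0 <= Mj ->
  25 * Rr ^+ 2 / c + 25 <= C' ->
  C' * N * Mi <= Fi -> C' * N * Mj <= Fj -> Fi <= Rmax ^+ 2 -> Fj <= Rmax ^+ 2 ->
  c * Rmin ^+ 2 <= Fi ->
  alpha * (5 * H * Rmax ^+ 2 * N * K) <= 1 ->
  `|Di - alpha / N * (gi * Fi)| <= alpha * G * Mi + E ->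
  `|Dj - alpha / N * (gj * Fj)| <= alpha * G * Mj + E ->
  Dj - Di <= - (gj * alpha * c * Rmin ^+ 2 / N) * (gi / gj - Rr ^+ 2 / c)
             + alpha * Rmax ^+ 2 / (K * N) * G.
Proof.
move=> Rr K E alpha0 N0 c0 H0 Rmin0 gi0 gj0 G0 G1 Mi0 Mj0 C'_ge NOi NOj Fi_le Fj_le Fi_ge
  step.
have Rrc0 : 0 <= Rr ^+ 2 / c by rewrite divr_ge0 ?sqr_ge0 ?ltW.
have K0 : 0 < K by rewrite /K; lra.
set X := alpha * Rmax ^+ 2 / (K * N) * G.
have XKN : X * (K * N) = alpha * G * Rmax ^+ 2 by rewrite /X; field; rewrite !gt_eqF ?mulr_gt0.
have aG0 : 0 <= alpha * G := mulr_ge0 (ltW alpha0) G0.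
(* Near-orthogonality with [C' >= 5 K / 2] makes each cross term at most [2 X / 5]. *)
have cross_le M : 0 <= M -> C' * N * M <= Rmax ^+ 2 -> alpha * G * M <= 2 / 5 * X.
  move=> M0 hM; rewrite -(ler_pM2r (mulr_gt0 K0 N0)) -[2 / 5 * X * _]mulrA XKN.
  have : 5 / 2 * K * (N * M) <= Rmax ^+ 2.
    apply: le_trans hM; rewrite -[C' * N * M]mulrA.
    by apply: ler_wpM2r; [exact: mulr_ge0 (ltW N0) M0 | rewrite /K; lra].
  move/(ler_wpM2l aG0).
  rewrite (_ : _ * (5 / 2 * K * (N * M)) = 5 / 2 * (alpha * G * M * (K * N))); last by ring.
  lra.
(* The step-size condition makes the Taylor error at most [X / 10]. *)
have err_le : 2 * E <= X / 5.
  pose Q := alpha * H * Rmax ^+ 2.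
  have Q0 : 0 <= Q := mulr_ge0 (mulr_ge0 (ltW alpha0) H0) (sqr_ge0 _).
  have QKN : Q * (K * N) <= 1 / 5 by rewrite /Q; lra.
  rewrite -(ler_pM2r (mulr_gt0 K0 N0)) [X / 5 * _]mulrAC XKN.
  rewrite (_ : 2 * E * _ = alpha * G * Rmax ^+ 2 * (G * Q * (K * N))); last first.
    by rewrite /E /Q; field.
  have GQKN : G * Q * (K * N) <= 1 / 5.
    apply: le_trans QKN; rewrite -mulrA ler_piMl //.
    exact: mulr_ge0 Q0 (ltW (mulr_gt0 K0 N0)).
  have := ler_wpM2l (mulr_ge0 aG0 (sqr_ge0 Rmax)) GQKN; lra.
have gap : - (gj * alpha * c * Rmin ^+ 2 / N) * (gi / gj - Rr ^+ 2 / c)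
    = alpha / N * (gj * Rmax ^+ 2) - alpha / N * (gi * (c * Rmin ^+ 2)).
  by rewrite /Rr; field; rewrite !gt_eqF.
have aN0 : 0 <= alpha / N by rewrite divr_ge0 ?ltW.
have Fi_lb : alpha / N * (gi * (c * Rmin ^+ 2)) <= alpha / N * (gi * Fi).
  by rewrite ler_wpM2l // ler_wpM2l.
have Fj_ub : alpha / N * (gj * Fj) <= alpha / N * (gj * Rmax ^+ 2).
  by apply: ler_wpM2l => //; apply: ler_wpM2l => //; exact: ltW.
move: (cross_le _ Mi0 (le_trans NOi Fi_le)) (cross_le _ Mj0 (le_trans NOj Fj_le)).
rewrite gap !ler_norml => ? ? /andP[? _] /andP[_ ?]; lra.
Qed.

Theorem mainTheorem9 (R : realType) (n m d : nat)
  (x : 'I_n -> 'I_d -> R) (y : 'I_n -> R) (a : 'I_m -> R)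
  (phi phi' phi'' : R -> R) (H c C' alpha : R) (W : 'M[R]_(m, d)) :
  (0 < n)%N -> (0 < m)%N ->
  (forall i, y i = 1 \/ y i = -1) ->
  (forall j, a j = (Num.sqrt m%:R)^-1 \/ a j = - (Num.sqrt m%:R)^-1) ->
  (forall i, 0 < vnorm (x i)) ->
  (forall u v : R, `|phi u - phi v| <= `|u - v|) ->
  (forall u : R, is_derive u 1 phi (phi' u)) ->
  (forall u : R, is_derive u 1 phi' (phi'' u)) ->
  (forall u : R, `|phi'' u| <= H) ->
  let Rr := Rmaxx x / Rminx x in
  0 < c ->
  25 * Rr ^+ 2 / c + 25 <= C' ->
  (forall i : 'I_n,
     C' * n%:R * \big[Num.max/0]_(k < n | k != i)
        `|frob (gradf a phi' W (x i)) (gradf a phi' W (x k))|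
     <= frob (gradf a phi' W (x i)) (gradf a phi' W (x i))) ->
  (forall i : 'I_n,
     c * vnorm (x i) ^+ 2 <= frob (gradf a phi' W (x i)) (gradf a phi' W (x i))) ->
  0 < alpha ->
  (* alpha <= [5 H Rmax^2 n (10R^2/c+10)]^-1, written multiplicatively so H = 0 means no constraint *)
  alpha * (5 * H * Rmaxx x ^+ 2 * n%:R * (10 * Rr ^+ 2 / c + 10)) <= 1 ->
  let W' := gd_step a phi phi' x y alpha W in
  let gg := fun i => gsig (y i * netf a phi W (x i)) in
  forall i j : 'I_n,
    expR (- (y i * netf a phi W' (x i))) / expR (- (y j * netf a phi W' (x j)))
    <= expR (- (y i * netf a phi W (x i))) / expR (- (y j * netf a phi W (x j)))
       * expR (- (gg j * alpha * c * Rminx x ^+ 2 / n%:R)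
                 * (gg i / gg j - Rr ^+ 2 / c))
       * expR (alpha * Rmaxx x ^+ 2 / ((10 * Rr ^+ 2 / c + 10) * n%:R)
                 * Ghat a phi x y W).
Proof.
move=> n0 _ y_sign a_pm x_gt0 phi_lip phi'_D phi''_D phi''_le Rr c0 C'_ge near_orth persist
  alpha0 step W' gg i j.
have phi'_le1 := lipschitz1_derive_le1 phi'_D phi''_D phi''_le phi_lip.
have a_sqr k : a k ^+ 2 = m%:R^-1 := sqr_pm_invsqrt (a_pm k).
have margin l := margin_step_le phi'_D phi''_D phi''_le phi'_le1 a_sqr W y_sign (ltW alpha0)
  (fun k => normr_dotv_le_Rmaxx x k l).
have grad_sqr_le l :=
  le_trans (frob_gradf_self_le phi'_le1 a_sqr W (x l)) (vnorm_sqr_le_Rmaxx x l).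
have persist_i := le_trans (ler_wpM2l (ltW c0) (Rminx_sqr_le_vnorm i n0 x_gt0)) (persist i).
have n_gt0 : 0 < n%:R :> R by rewrite ltr0n.
have := margin_gap_le alpha0 n_gt0 c0 (le_trans (normr_ge0 _) (phi''_le 0))
  (Rminx_gt0 n0 x_gt0) (ltW (gsig_gt0 _)) (gsig_gt0 _) (Ghat_ge0 _ _ _ _ _) (Ghat_le1 _ _ _ _ _)
  (bigmax_ge_id _ _ _ _) (bigmax_ge_id _ _ _ _) C'_ge (near_orth i) (near_orth j)
  (grad_sqr_le i) (grad_sqr_le j) persist_i step (margin i) (margin j).
rewrite -!expRB -!expRD ler_expR /W' /gg /Rr /=; lra.
Qed.
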